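(* Let $\nu\ge3$ be a square-free integer with $\nu\equiv2$ or $3\pmod 4$. Define $x_0=0$, $x_{n+1}=\sqrt{\nu+x_n}$, let $P_n$ be the minimal polynomial of $x_n$ and $C_n$ its constant term. Let $p$ be a rational prime dividing $C_n$ for some $n\ge1$, and let $n(p)$ be the least positive such $n$. Then the ideal $(p,x_{n(p)})$ of $\mathbb{Z}[x_{n(p)}]$ is proper.
   Context: Square roots are the positive real ones. *)

From HB Require Import structures.
From mathcomp Require Import all_boot all_order all_algebra.
From mathcomp Require Import reals.
Set Implicit Arguments. Unset Strict Implicit. Unset Printing Implicit Defensive.
Import Order.TTheory GRing.Theory Num.Theory.
Local Open Scope ring_scope.

Definition squarefree (nu : nat) : Prop :=
  forall d : nat, (1 < d)%N -> ~~ (d * d %| nu)%N.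

Fixpoint xseq (R : realType) (nu : nat) (n : nat) : R :=
  match n with
  | 0%N => 0
  | n'.+1 => Num.sqrt (nu%:R + xseq R nu n')
  end.

Definition is_minpoly (R : realType) (P : {poly rat}) (x : R) : Prop :=
  [/\ P \is monic, root (map_poly ratr P) x &
      forall Q : {poly rat}, Q != 0 -> root (map_poly ratr Q) x ->
        (size P <= size Q)%N].

Definition rdvd (p : nat) (c : rat) : Prop :=
  exists z : int, c = z%:~R /\ (p%:Z %| z)%Z.

(* evaluation of an integer polynomial at x : the elements of Z[x] *)
Definition zeval (R : realType) (a : {poly int}) (x : R) : R :=
  (map_poly (fun z : int => z%:~R) a).[x].

(** If 1 = p a(x) + x b(x) with a, b integer polynomials, then x is a root of
    the integer polynomial Q = 1 - p a - X b, so the minimal polynomial of x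
    divides Q over Q.  By Gauss's lemma the constant term of that monic
    minimal polynomial then divides the constant term 1 - p a(0) of Q in Z;
    if p divides that constant term, p divides 1. *)
From HB Require Import structures.
From mathcomp Require Import all_boot all_order all_algebra.
From mathcomp Require Import reals.
Set Implicit Arguments. Unset Strict Implicit. Unset Printing Implicit Defensive.
Import Order.TTheory GRing.Theory Num.Theory.
Local Open Scope ring_scope.

Lemma minpoly_dvdp (R : realType) (P Q : {poly rat}) (x : R) :
  is_minpoly P x -> root (map_poly ratr Q) x -> P %| Q.
Proof.
move=> [monP rootP minP] rootQ; have P_neq0 : P != 0 by apply: monic_neq0.
have [/modp_eq0P //|mod_neq0] := eqVneq (Q %% P) 0.
have root_mod : root (map_poly ratr (Q %% P)) x.
  move: rootQ; rewrite /root {1}(divp_eq Q P) !rmorphD !rmorphM /= !hornerE.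
  by move/eqP: rootP => ->; rewrite mulr0 add0r.
by have := minP _ mod_neq0 root_mod; rewrite leqNgt ltn_modp P_neq0.
Qed.

Lemma zeval_ratr (R : realType) (a : {poly int}) (x : R) :
  zeval a x = (map_poly ratr (map_poly intr a)).[x].
Proof.
rewrite /zeval -map_poly_comp; congr _.[x].
by apply: eq_map_poly => z /=; rewrite ratr_int.
Qed.

Lemma root_unit_ideal_relation (R : realType) (p : nat) (a b : {poly int})
    (x : R) :
  1 = p%:R * zeval a x + x * zeval b x ->
  root (map_poly ratr (map_poly intr (1 - p%:R%:P * a - 'X * b))) x.
Proof.
move=> unit_rel; rewrite /root -zeval_ratr /zeval.
rewrite !rmorphB /= rmorph1 !rmorphM /= map_polyC map_polyX /= !hornerE /=.
have p_int : ((p%:R : int)%:~R : R) = p%:R by rewrite natz.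
by rewrite -/(zeval a x) -/(zeval b x) p_int -addrA -opprD -unit_rel subrr.
Qed.

Lemma monic_dvdp_int_coef0 (P : {poly rat}) (Q : {poly int}) (z : int) :
  P \is monic -> P`_0 = z%:~R -> P %| map_poly intr Q -> (z %| Q`_0)%Z.
Proof.
move=> monP P0 /dvdpP_rat_int[P1 [c c_neq0 P_eq] [S Q_eq]].
have c_lead : c * (lead_coef P1)%:~R = 1.
  by move/monicP: monP; rewrite P_eq lead_coefZ lead_coef_map_inj //; apply: intr_inj.
have P1_0 : P1`_0 = z * lead_coef P1.
  apply: (@intr_inj rat); rewrite rmorphM /= -P0 P_eq coefZ coef_map /=.
  by rewrite mulrAC c_lead mul1r.
by rewrite Q_eq coef0M P1_0 -mulrA dvdz_mulr.
Qed.

Theorem lemma4p9 (R : realType) (nu : nat) (P : nat -> {poly rat})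
    (p : nat) (m : nat) :
  (3 <= nu)%N -> squarefree nu -> (nu %% 4 = 2 \/ nu %% 4 = 3)%N ->
  (forall n : nat, is_minpoly (P n) (xseq R nu n)) ->
  prime p ->
  (0 < m)%N -> rdvd p (P m)`_0 ->
  (forall k : nat, (0 < k < m)%N -> ~ rdvd p (P k)`_0) ->
  ~ (exists a b : {poly int},
        1 = p%:R * zeval a (xseq R nu m) + xseq R nu m * zeval b (xseq R nu m)).
Proof.
move=> _ _ _ minP p_prime _ [z [P0 p_dvd_z]] _ [a [b unit_rel]].
have [monP _ _] := minP m.
have z_dvd := monic_dvdp_int_coef0 monP P0
  (minpoly_dvdp (minP m) (root_unit_ideal_relation unit_rel)).
have := dvdz_trans p_dvd_z z_dvd.
rewrite !coefB coef1 coefCM coefXM /= subr0 rpredBr ?natz ?dvdz_mulr //.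
by rewrite dvdz1 /= => /eqP p_eq1; move: p_prime; rewrite p_eq1.
Qed.
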